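(* For any graph $G$ with no isolated vertex, order $n$ and maximum degree $\Delta$, $$\left\lceil\frac{2n}{\Delta}\right\rceil\le\gamma_{(2,2,2)}(G)\le 2\gamma_t(G).$$ Furthermore, if $G$ has minimum degree $\delta\ge2$, then $\gamma_{(2,2,2)}(G)\le\gamma_{\times2,t}(G)$.
   Context: All graphs are finite and simple; $N(v)$ is the open neighbourhood. $\gamma_{(2,2,2)}(G)$ is the minimum of $\sum_v f(v)$ over functions $f:V(G)\to\{0,1,2\}$ with $\sum_{u\in N(v)}f(u)\ge2$ for every vertex $v$. $\gamma_t(G)$ is the total domination number (minimum size of $S$ such that every vertex has a neighbour in $S$). $\gamma_{\times2,t}(G)$ (double total domination number) is the minimum size of $S\subseteq V(G)$ such that every vertex has at least two neighbours in $S$. *)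

From mathcomp Require Import all_boot.
Set Implicit Arguments. Unset Strict Implicit. Unset Printing Implicit Defensive.

Definition simple_graph (T : finType) (e : rel T) : Prop :=
  symmetric e /\ irreflexive e.

Definition N (T : finType) (e : rel T) (v : T) : {set T} := [set u | e v u].

Definition deg (T : finType) (e : rel T) (v : T) : nat := #|N e v|.
Definition maxdeg (T : finType) (e : rel T) : nat := \max_(v : T) deg e v.
Definition mindeg (T : finType) (e : rel T) : nat := \big[minn/#|T|]_(v : T) deg e v.

Definition no_isolated (T : finType) (e : rel T) : Prop := forall v : T, 0 < deg e v.

Definition is_222 (T : finType) (e : rel T) (f : {ffun T -> 'I_3}) : bool :=
  [forall v, 2 <= \sum_(u in N e v) (f u : nat)].
Definition weight (T : finType) (f : {ffun T -> 'I_3}) : nat := \sum_(v : T) (f v : nat).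
(* minimum weight; the default 2|V| is attained by the constant-2 function
   whenever G has no isolated vertex *)
Definition gamma222 (T : finType) (e : rel T) : nat :=
  \big[minn/#|T|.*2]_(f : {ffun T -> 'I_3} | is_222 e f) weight f.

Definition is_tds (T : finType) (e : rel T) (S : {set T}) : bool :=
  [forall v, [exists u in S, e v u]].
Definition gamma_t (T : finType) (e : rel T) : nat :=
  \big[minn/#|T|]_(S : {set T} | is_tds e S) #|S|.

Definition is_dtds (T : finType) (e : rel T) (S : {set T}) : bool :=
  [forall v, 2 <= #|N e v :&: S|].
Definition gamma_x2t (T : finType) (e : rel T) : nat :=
  \big[minn/#|T|]_(S : {set T} | is_dtds e S) #|S|.

From mathcomp Require Import all_boot all_order zify.
Import Order.TTheory.

(* Lower bound: summing the condition [2 <= sum_(u in N v) f u] over all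
   vertices v counts every value f u exactly deg u <= Delta times, so
   2n <= Delta * w(f).  Upper bounds: for a total dominating set S the
   function 2 * 1_S is a (2,2,2)-function of weight 2|S|, and for a double
   total dominating set S so is 1_S, of weight |S|. *)

Section BigMinNat.
Variables (I : finType) (P : pred I) (F : I -> nat) (x0 : nat).

Lemma bigminn_le_cond i : P i -> \big[minn/x0]_(j | P j) F j <= F i.
Proof. by move=> Pi; have := bigmin_le_cond x0 F Pi; rewrite minEnat. Qed.

Lemma bigminn_le_id : \big[minn/x0]_(j | P j) F j <= x0.
Proof. by have := bigmin_le_id (index_enum I) x0 P F; rewrite minEnat. Qed.

Lemma bigminn_ind (K : nat -> Prop) :
  K x0 -> (forall i, P i -> K (F i)) -> K (\big[minn/x0]_(j | P j) F j).
Proof. by move=> K0 KF; apply: big_ind => // m n Km Kn; rewrite /minn; case: ifP. Qed.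

End BigMinNat.

Lemma leq_ceil_divLR a b d : 0 < d -> ((a + d - 1) %/ d <= b) = (a <= b * d).
Proof. by move=> d_gt0; rewrite -ltnS ltn_divLR //; apply/idP/idP; lia. Qed.

Section Graph.
Variables (T : finType) (e : rel T).

Lemma deg_le_maxdeg v : deg e v <= maxdeg e.
Proof. exact: (leq_bigmax_cond (F := deg e)). Qed.

Lemma mindeg_le_deg v : mindeg e <= deg e v.
Proof. exact: bigminn_le_cond. Qed.

Lemma gamma222_le_weight f : is_222 e f -> gamma222 e <= weight f.
Proof. exact: bigminn_le_cond. Qed.

Lemma gamma222_le_double_card : gamma222 e <= #|T|.*2.
Proof. exact: bigminn_le_id. Qed.

Definition set_weighting (c : 'I_3) (S : {set T}) : {ffun T -> 'I_3} :=
  [ffun v => if v \in S then c else ord0].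

Lemma sum_set_weighting c S (A : {pred T}) :
  \sum_(u in A) (set_weighting c S u : nat) = c * #|[predI A & S]|.
Proof.
rewrite (eq_bigr (fun u => if u \in S then c : nat else 0)); last first.
  by move=> u _; rewrite ffunE; case: (u \in S).
by rewrite -big_mkcondr sum_nat_const mulnC.
Qed.

Lemma gamma222_le_set_weighting (c : 'I_3) S :
  (forall v, 2 <= c * #|N e v :&: S|) -> gamma222 e <= c * #|S|.
Proof.
move=> cover; have -> : c * #|S| = weight (set_weighting c S).
  rewrite /weight sum_set_weighting.
  by congr (_ * _); apply: eq_card => u; rewrite !inE.
apply/gamma222_le_weight/forallP => v; rewrite sum_set_weighting.
have -> : #|[predI N e v & S]| = #|N e v :&: S|.
  by apply: eq_card => u; rewrite !inE.
exact: cover.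
Qed.

Lemma gamma222_le_tds S : is_tds e S -> gamma222 e <= #|S|.*2.
Proof.
move=> /forallP tdS; rewrite -mul2n.
apply: (@gamma222_le_set_weighting (@Ordinal 3 2 isT)) => v /=.
have /existsP [u /andP [uS evu]] := tdS v.
by rewrite leq_pmulr // card_gt0; apply/set0Pn; exists u; rewrite !inE evu.
Qed.

Lemma gamma222_le_dtds S : is_dtds e S -> gamma222 e <= #|S|.
Proof.
move=> /forallP dtdS; rewrite -[#|S|]mul1n.
apply: (@gamma222_le_set_weighting (@Ordinal 3 1 isT)) => v.
by rewrite mul1n; exact: dtdS.
Qed.

Lemma dtds_setT : 2 <= mindeg e -> is_dtds e [set: T].
Proof.
move=> mindeg_ge2; apply/forallP => v.
by rewrite setIT; apply: leq_trans mindeg_ge2 (mindeg_le_deg v).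
Qed.

Lemma gamma222_le_gamma_x2t : 2 <= mindeg e -> gamma222 e <= gamma_x2t e.
Proof.
move=> mindeg_ge2.
apply: (@bigminn_ind _ _ _ _ (leq (gamma222 e))) => [|S].
  by rewrite -cardsT; apply/gamma222_le_dtds/dtds_setT.
exact: gamma222_le_dtds.
Qed.

Lemma gamma222_le_double_gamma_t : gamma222 e <= (gamma_t e).*2.
Proof.
apply: (@bigminn_ind _ _ _ _ (fun n => gamma222 e <= n.*2)) => [|S].
  exact: gamma222_le_double_card.
exact: gamma222_le_tds.
Qed.

Hypothesis e_sym : symmetric e.

Lemma sum_neighbourhood_sums (f : T -> nat) :
  \sum_v \sum_(u in N e v) f u = \sum_u deg e u * f u.
Proof.
rewrite (exchange_big_dep predT) //=; apply: eq_bigr => u _.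
rewrite -sum_nat_const; apply: eq_bigl => v.
by rewrite !inE e_sym.
Qed.

Lemma double_card_le_weight_maxdeg f :
  is_222 e f -> #|T|.*2 <= weight f * maxdeg e.
Proof.
move=> /forallP f222.
have -> : #|T|.*2 = \sum_(v : T) 2 by rewrite sum_nat_const -mul2n mulnC.
apply: (@leq_trans (\sum_v \sum_(u in N e v) (f u : nat))).
  by apply: leq_sum => v _; apply: f222.
rewrite (sum_neighbourhood_sums (fun u => f u : nat)) /weight big_distrl /=.
by apply: leq_sum => u _; rewrite mulnC leq_mul2l deg_le_maxdeg orbT.
Qed.

Lemma ceil_div_maxdeg_le_gamma222 :
  (#|T|.*2 + maxdeg e - 1) %/ maxdeg e <= gamma222 e.
Proof.
have [->|Delta_gt0] := posnP (maxdeg e); first by rewrite divn0.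
apply: (@bigminn_ind _ _ _ _ (leq _)) => [|f f222]; rewrite leq_ceil_divLR //.
  by rewrite leq_pmulr.
exact: double_card_le_weight_maxdeg.
Qed.

End Graph.

Theorem theorem15 (T : finType) (e : rel T) :
  simple_graph e -> no_isolated e ->
  ((#|T|.*2 + maxdeg e - 1) %/ maxdeg e <= gamma222 e /\
   gamma222 e <= (gamma_t e).*2) /\
  (2 <= mindeg e -> gamma222 e <= gamma_x2t e).
Proof.
move=> [e_sym _] _.
split; [split|].
- exact: ceil_div_maxdeg_le_gamma222.
- exact: gamma222_le_double_gamma_t.
- exact: gamma222_le_gamma_x2t.
Qed.
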